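(* If $f:S\to T$ is a nested tuple morphism, then $\mathrm{coal}(L_f)=L_{\mathrm{coal}(f)}$.
   Context: Nested tuples (of positive integers): a positive integer or a finite tuple of nested tuples; flattening $X^\flat$ = integer leaves left to right, $\mathrm{len}$, $\mathrm{entry}_i$. $\langle n\rangle_*=\{*,1,\dots,n\}$. A layout is $L=S:D$ with congruent nested tuples $S$ (positive) and $D$ (nonnegative); $L^\flat=S^\flat:D^\flat$. For a flat layout $L=(s_1,\dots,s_m):(d_1,\dots,d_m)$, $\mathrm{squeeze}(L)$ removes all modes $s_i:d_i$ with $s_i=1$, and $\mathrm{coal}^\flat(L)$ is obtained from $\mathrm{squeeze}(L)$ by repeatedly replacing adjacent modes $s_i,s_{i+1}:d_i,d_{i+1}$ with $d_{i+1}=s_id_i$ by the single mode $s_is_{i+1}:d_i$ until no such pair remains. For a layout $L$, writing $\mathrm{coal}^\flat(L^\flat)=(s_1,\dots,s_m):(d_1,\dots,d_m)$: $\mathrm{coal}(L)$ is this flat layout if $m>1$, the depth-$0$ layout $s_1:d_1$ if $m=1$, and $1:0$ if $m=0$. A tuple morphism $f:(s_1,\dots,s_m)\to(t_1,\dots,t_n)$ is given by a pointed map $\alpha:\langle m\rangle_*\to\langle n\rangle_*$ with each $j\ne*$ having at most one preimage and $s_i=t_{\alpha(i)}$ whenever $\alpha(i)\ne*$; a nested tuple morphism $f:S\to T$ is a tuple morphism $f^\flat:S^\flat\to T^\flat$. The encoded layout $L_f$ has shape $S$ and stride congruent to $S$ with $i$-th flattened entry $0$ if $\alpha(i)=*$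 and $\prod_{j<\alpha(i)}t_j$ otherwise (where $T^\flat=(t_1,\dots,t_n)$). Coalesce of a tuple morphism $f$ over $\alpha$: $\mathrm{squeeze}(f)$ is obtained by deleting domain indices $i$ with $s_i=1$ and codomain indices $j$ with $t_j=1$ (renumbering increasingly); write it $(s_1,\dots,s_m)\to(t_1,\dots,t_n)$ over $\beta$. On $\{1,\dots,m\}$, for $i\le i'$ set $i\sim i'$ if either $\beta(i'')=*$ for all $i\le i''\le i'$, or $\beta(i'')=\beta(i)+(i''-i)$ for all $i\le i''\le i'$. On $\{1,\dots,n\}$, for $j\le j'$ set $j\sim j'$ if there is $i$ with $\beta(i+t)=j+t$ for all $0\le t\le j'-j$. The classes are intervals, ordered increasingly, identified with $\{1,\dots,\bar m\}$ and $\{1,\dots,\bar n\}$; $\bar s_{[i]}=\prod_{i'\in[i]}s_{i'}$, $\bar t_{[j]}=\prod_{j'\in[j]}t_{j'}$, $\bar\beta([i])=[\beta(i)]$ (or $*$). Then $\mathrm{coal}^\flat(f):(\bar s_1,\dots,\bar s_{\bar m})\to(\bar t_1,\dots,\bar t_{\bar n})$ lies over $\bar\beta$. For a nested tuple morphism $f$: if $\bar m>1$, $\mathrm{coal}(f)=\mathrm{coal}^\flat(f^\flat)$; if $\bar m=1$, $\mathrm{coal}(f)$ is the morphism from the integer $\bar s_1$ to $(\bar t_1,\dots,\bar t_{\bar n})$ with the same underlying map; if $\bar m=0$, $\mathrm{coal}(f)$ is the morphism from the integer $1$ to $(\bar t_1,\dots,\bar t_{\bar n})$ sending its entry to $*$.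 *)

From mathcomp Require Import all_boot.
Set Implicit Arguments. Unset Strict Implicit. Unset Printing Implicit Defensive.

(* Nested tuples of positive integers: [nest nat] + positivity.        *)
(* A layout S:D with S, D congruent is encoded as a nested tuple of    *)
(* pairs (s_i, d_i) : nest (nat * nat) (congruence is then automatic). *)
Inductive nest (A : Type) : Type :=
  | NLeaf of A
  | NNode of seq (nest A).
Arguments NLeaf {A}.
Arguments NNode {A}.

Fixpoint flat (A : Type) (t : nest A) : seq A :=
  match t with
  | NLeaf a => [:: a]
  | NNode l => flatten (map (@flat A) l)
  end.

Definition layout := nest (nat * nat).

Fixpoint zipn (A B : Type) (b0 : B) (t : nest A) (ds : seq B)
  : nest (A * B) * seq B :=
  match t with
  | NLeaf a => (NLeaf (a, head b0 ds), behead ds)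
  | NNode l =>
      let fix go (l : seq (nest A)) (ds : seq B) : seq (nest (A * B)) * seq B :=
        match l with
        | [::] => ([::], ds)
        | x :: l' =>
            let (x', ds') := zipn b0 x ds in
            let (l'', ds'') := go l' ds' in (x' :: l'', ds'')
        end in
      let (l', ds') := go l ds in (NNode l', ds')
  end.

Definition squeezeL (l : seq (nat * nat)) : seq (nat * nat) :=
  filter (fun p => p.1 != 1) l.

(* Repeatedly merge adjacent modes (s,d),(s',d') with d' = s*d into (s*s',d).
   (The rewriting is confluent; this right fold computes its normal form.) *)
Fixpoint coal_merge (l : seq (nat * nat)) : seq (nat * nat) :=
  match l with
  | [::] => [::]
  | x :: l' =>
      match coal_merge l' with
      | [::] => [:: x]
      | y :: r => if y.2 == x.1 * x.2 then (x.1 * y.1, x.2) :: r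
                  else x :: y :: r
      end
  end.

Definition coal_flatL (l : seq (nat * nat)) : seq (nat * nat) :=
  coal_merge (squeezeL l).

Definition coalL (L : layout) : layout :=
  match coal_flatL (flat L) with
  | [::] => NLeaf (1, 0)
  | [:: p] => NLeaf p
  | c => NNode (map NLeaf c)
  end.

(* Tuple morphisms.  Indices are 0-based: domain index i < m, the      *)
(* pointed map alpha is the list [tm_map] of length m, with None = *   *)
(* and Some j meaning alpha(i) = j (j < n).                            *)
Record tmor := TMor { tm_dom : seq nat; tm_cod : seq nat;
                      tm_map : seq (option nat) }.

Definition is_tmor (f : tmor) : Prop :=
  [/\ all (fun s => 0 < s) (tm_dom f), all (fun t => 0 < t) (tm_cod f),
      size (tm_map f) = size (tm_dom f),
      (forall i j, nth None (tm_map f) i = Some j ->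
         j < size (tm_cod f) /\ nth 0 (tm_dom f) i = nth 0 (tm_cod f) j) &
      (forall i i' j, nth None (tm_map f) i = Some j ->
         nth None (tm_map f) i' = Some j -> i = i')].

Record ntmor := NTMor { ntm_dom : nest nat; ntm_cod : nest nat;
                        ntm_map : seq (option nat) }.

Definition flat_mor (f : ntmor) : tmor :=
  TMor (flat (ntm_dom f)) (flat (ntm_cod f)) (ntm_map f).

Definition is_ntmor (f : ntmor) : Prop := is_tmor (flat_mor f).

Definition enc_stride (t : seq nat) (o : option nat) : nat :=
  match o with
  | None => 0
  | Some j => foldr muln 1 (take j t)
  end.

Definition Lf (f : ntmor) : layout :=
  (zipn 0 (ntm_dom f) (map (enc_stride (flat (ntm_cod f))) (ntm_map f))).1.

Definition renumC (t : seq nat) (j : nat) : nat :=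
  count (fun k => nth 0 t k != 1) (iota 0 j).

Definition squeezeM (f : tmor) : tmor :=
  TMor (filter (fun s => s != 1) (tm_dom f))
       (filter (fun t => t != 1) (tm_cod f))
       [seq omap (renumC (tm_cod f)) p.2
          | p <- zip (tm_dom f) (tm_map f) & p.1 != 1].

Section CoalMor.
Variable g : tmor. (* assumed squeezed *)
Let s := tm_dom g.
Let t := tm_cod g.
Let b := tm_map g.
Let m := size s.
Let n := size t.

(* i ~ i' for i <= i' on the domain *)
Definition relD0 (i i' : nat) : bool :=
  let rng := iota i (i' - i).+1 in
  all (fun k => nth None b k == None) rng
  || ((nth None b i != None) &&
      all (fun k => nth None b k == omap (addn (k - i)) (nth None b i)) rng).

(* j ~ j' for j <= j' on the codomain *)
Definition relC0 (j j' : nat) : bool :=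
  has (fun i => all (fun u => nth None b (i + u) == Some (j + u))
                    (iota 0 (j' - j).+1)) (iota 0 m).

Definition leaderD (i : nat) : bool := all (fun k => ~~ relD0 k i) (iota 0 i).
Definition leaderC (j : nat) : bool := all (fun k => ~~ relC0 k j) (iota 0 j).

Definition clsD (i : nat) : nat := (count leaderD (iota 0 i.+1)).-1.
Definition clsC (j : nat) : nat := (count leaderC (iota 0 j.+1)).-1.
Definition mbar : nat := count leaderD (iota 0 m).
Definition nbar : nat := count leaderC (iota 0 n).

Definition sbar : seq nat :=
  [seq foldr muln 1 [seq nth 0 s i | i <- iota 0 m & clsD i == c] | c <- iota 0 mbar].
Definition tbar : seq nat :=
  [seq foldr muln 1 [seq nth 0 t j | j <- iota 0 n & clsC j == c] | c <- iota 0 nbar].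
(* bar beta([i]) = [beta(i)], computed at the least element of each class *)
Definition bbar : seq (option nat) :=
  [seq omap clsC (nth None b i) | i <- iota 0 m & leaderD i].

Definition coal_sq : tmor := TMor sbar tbar bbar.
End CoalMor.

Definition coal_flatM (f : tmor) : tmor := coal_sq (squeezeM f).

Definition coalM (f : ntmor) : ntmor :=
  let g := coal_flatM (flat_mor f) in
  let T := NNode (map NLeaf (tm_cod g)) in
  match tm_dom g with
  | [::] => NTMor (NLeaf 1) T [:: None]
  | [:: s1] => NTMor (NLeaf s1) T (tm_map g)
  | sb => NTMor (NNode (map NLeaf sb)) T (tm_map g)
  end.

From mathcomp Require Import all_boot zify.
Set Implicit Arguments. Unset Strict Implicit. Unset Printing Implicit Defensive.

(* Both coalesce operations are "squeeze, then merge".  Squeezing commutes with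
   encoding: deleting codomain entries equal to 1 leaves the prefix products
   t_1 * ... * t_(j-1), which are the strides, unchanged.  Once every codomain
   entry exceeds 1 these prefix products are strictly increasing, so the layout
   merge test d_(k+1) = s_k * d_k holds exactly when beta(k+1) = beta(k) + 1 or
   beta(k) = beta(k+1) = *, i.e. when k ~ k+1.  Hence merging groups the modes
   into the domain classes, with shapes the products s-bar.  The stride of a
   class is the prefix product of t up to beta(i), i its least element; by
   injectivity of beta, beta(i) is the least element of its codomain class, so
   this is also the prefix product of t-bar up to [beta(i)]. *)

Section NestInduction.
Variables (A : Type) (P : nest A -> Prop).
Hypothesis P_leaf : forall a, P (NLeaf a).
Hypothesis P_node : forall l, foldr (fun x acc => P x /\ acc) True l -> P (NNode l).

Fixpoint nest_ind_seq (t : nest A) : P t :=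
  match t with
  | NLeaf a => P_leaf a
  | NNode l => P_node ((fix all_P l : foldr (fun x acc => P x /\ acc) True l :=
                         if l is x :: l' then conj (nest_ind_seq x) (all_P l') else I) l)
  end.
End NestInduction.

Lemma flat_node_cons (A : Type) (x : nest A) l :
  flat (NNode (x :: l)) = flat x ++ flat (NNode l).
Proof. by []. Qed.

Section Zipn.
Variables (A B : Type) (b0 : B).

Lemma zipn_cons (x : nest A) l ds :
  exists l', (zipn b0 (NNode l) (zipn b0 x ds).2).1 = NNode l' /\
    zipn b0 (NNode (x :: l)) ds =
      (NNode ((zipn b0 x ds).1 :: l'), (zipn b0 (NNode l) (zipn b0 x ds).2).2).
Proof.
rewrite [zipn b0 (NNode (x :: l)) ds]/=; case: (zipn b0 x ds) => x' ds' /=.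
by case: (_ l ds') => l' ds''; exists l'.
Qed.

Lemma zip_cat_take (s1 s2 : seq A) (ds : seq B) : size s1 <= size ds ->
  zip (s1 ++ s2) ds = zip s1 ds ++ zip s2 (drop (size s1) ds).
Proof.
elim: s1 ds => [|x s1 IH] ds; first by rewrite drop0; case: ds.
by case: ds => [|d ds] //= le_s1; rewrite IH.
Qed.

Lemma flat_zipn (t : nest A) ds : size (flat t) <= size ds ->
  flat (zipn b0 t ds).1 = zip (flat t) ds /\
  (zipn b0 t ds).2 = drop (size (flat t)) ds.
Proof.
elim/nest_ind_seq: t ds => [a|l]; first by case=> [|d ds] //=; rewrite drop0; case: ds.
elim: l => [|x l IHl]; first by move=> _ ds _; rewrite drop0; case: ds.
move=> [IHx /IHl {}IHl] ds; rewrite flat_node_cons size_cat => le_ds.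
have [l' [El ->]] := zipn_cons x l ds; rewrite !flat_node_cons -El.
have [-> Dx] := IHx ds (leq_trans (leq_addr _ _) le_ds).
have [|-> ->] := IHl (zipn b0 x ds).2; first by rewrite Dx size_drop; lia.
rewrite Dx drop_drop zip_cat_take ?(leq_trans (leq_addr _ _) le_ds) //.
by rewrite addnC.
Qed.

Lemma zipn_leaves (l : seq A) ds : size ds = size l ->
  (zipn b0 (NNode (map NLeaf l)) ds).1 = NNode (map NLeaf (zip l ds)).
Proof.
elim: l ds => [|a l IH] [|d ds] // [/IH E].
have [l' [El ->]] := zipn_cons (NLeaf a) (map NLeaf l) (d :: ds).
by rewrite E in El; case: El => <-.
Qed.
End Zipn.

Lemma flat_leaves (A : Type) (l : seq A) : flat (NNode (map NLeaf l)) = l.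
Proof. by elim: l => //= a l ->. Qed.

Lemma iota0S n : iota 0 n.+1 = 0 :: map succn (iota 0 n).
Proof. by rewrite /= -[1]/(1 + 0) iotaDl. Qed.

Lemma count_iotaS (p : pred nat) k :
  count p (iota 0 k.+1) = count p (iota 0 k) + p k.
Proof. by rewrite -addn1 iotaD count_cat /= addn0. Qed.

Lemma count_iota_mono (p : pred nat) k k' : k <= k' ->
  count p (iota 0 k) <= count p (iota 0 k').
Proof. by move=> le_kk'; rewrite -(subnKC le_kk') iotaD count_cat leq_addr. Qed.

Definition prefix_prod (t : seq nat) (k : nat) : nat := foldr muln 1 (take k t).

Lemma prefix_prod_nth t j : j <= size t ->
  prefix_prod t j = \prod_(k <- iota 0 j) nth 0 t k.
Proof. by move=> le_jt; rewrite /prefix_prod -(map_nth_iota0 0 le_jt) foldrE big_map. Qed.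

Lemma prefix_prod_gt0 t k : all (leq 1) t -> 0 < prefix_prod t k.
Proof.
move=> /allP t_gt0; rewrite /prefix_prod foldrE big_seq_cond prodn_cond_gt0 // => x.
by rewrite andbT => /mem_take/t_gt0.
Qed.

Lemma prefix_prodS t j : j < size t -> prefix_prod t j.+1 = nth 0 t j * prefix_prod t j.
Proof.
by move=> lt_jt; rewrite /prefix_prod !foldrE (take_nth 0 lt_jt) -cats1 big_cat big_seq1 mulnC.
Qed.

Lemma prefix_prod_ltn t i j : all (leq 2) t -> i < j <= size t ->
  prefix_prod t i < prefix_prod t j.
Proof.
move=> /allP t_gt1 /andP[lt_ij le_jt].
have t_gt0 : all (leq 1) t by apply/allP => x /t_gt1; apply: leq_trans.
elim: j lt_ij le_jt => [//|j IH] lt_ij lt_jt.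
have tj_gt1 : 1 < nth 0 t j := t_gt1 _ (mem_nth 0 lt_jt).
rewrite prefix_prodS //; apply: leq_ltn_trans (ltn_Pmull tj_gt1 (prefix_prod_gt0 _ t_gt0)).
rewrite ltnS leq_eqVlt in lt_ij; case/orP: lt_ij => [/eqP-> // | lt_ij].
exact/ltnW/IH/ltnW.
Qed.

Lemma eq_prefix_prod t i j : all (leq 2) t -> i <= size t -> j <= size t ->
  (prefix_prod t i == prefix_prod t j) = (i == j).
Proof.
move=> t_gt1 le_it le_jt.
case: (ltngtP i j) => [lt_ij|lt_ji|->]; last by rewrite eqxx.
  by rewrite ltn_eqF // prefix_prod_ltn ?lt_ij.
by rewrite gtn_eqF // prefix_prod_ltn ?lt_ji.
Qed.

(* A predicate [ld] with [ld 0] cuts 0, ..., m-1 into intervals, each starting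
   at an index satisfying [ld]; [class_idx ld i] numbers from 0 the interval
   containing [i], and [group_prod ld w m] lists the products of [w] over the
   intervals. *)
Definition class_idx (ld : pred nat) (i : nat) : nat := (count ld (iota 0 i.+1)).-1.

Definition class_block (ld : pred nat) (w : nat -> nat) (m c : nat) : seq nat :=
  [seq w i | i <- iota 0 m & class_idx ld i == c].

Definition group_prod (ld : pred nat) (w : nat -> nat) (m : nat) : seq nat :=
  [seq foldr muln 1 (class_block ld w m c) | c <- iota 0 (count ld (iota 0 m))].

(* The interval starts of 1, ..., m-1, renumbered from 0. *)
Definition shift_leaders (ld : pred nat) : pred nat := fun j => (j == 0) || ld j.+1.

Lemma count_leaders_gt0 (ld : pred nat) k : ld 0 -> 0 < count ld (iota 0 k.+1).
Proof. by rewrite iota0S /= => ->. Qed.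

Section LeaderClasses.
Variable ld : pred nat.
Hypothesis ld0 : ld 0.

Lemma count_shift_leaders k :
  count ld (iota 0 k.+2) = count (shift_leaders ld) (iota 0 k.+1) + ld 1.
Proof.
rewrite iota0S [iota 0 k.+1]iota0S /= ld0 /shift_leaders /= !count_map.
by rewrite (@eq_count _ _ (preim succn (preim succn ld))) //; case: (ld 1); lia.
Qed.

Lemma class_idx0 : class_idx ld 0 = 0.
Proof. by rewrite /class_idx /= ld0. Qed.

Lemma class_idx_shift k :
  class_idx ld k.+1 = class_idx (shift_leaders ld) k + ld 1.
Proof. by rewrite /class_idx count_shift_leaders. Qed.

Lemma class_block_cons (w : nat -> nat) n c :
  class_block ld w n.+1 c =
  (if c == 0 then [:: w 0] else [::]) ++
  [seq w i.+1 | i <- iota 0 n & class_idx (shift_leaders ld) i + ld 1 == c].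
Proof.
rewrite /class_block iota0S -cat1s filter_cat map_cat filter_map -map_comp /=.
rewrite class_idx0 eq_sym; congr (_ ++ _); first by case: (c == 0).
by congr map; apply: eq_filter => i /=; rewrite class_idx_shift.
Qed.

Lemma class_block0 (w : nat -> nat) n :
  class_block ld w n.+1 0 =
  w 0 :: (if ld 1 then [::] else class_block (shift_leaders ld) (fun i => w i.+1) n 0).
Proof.
rewrite class_block_cons /class_block; case: (ld 1) => /=.
  by rewrite (@eq_filter _ _ pred0) ?filter_pred0 // => i; rewrite addn1.
by congr (_ :: map _ _); apply: eq_filter => i; rewrite addn0.
Qed.

Lemma class_blockS (w : nat -> nat) n c :
  class_block ld w n.+1 c.+1 =
  class_block (shift_leaders ld) (fun i => w i.+1) n (c.+1 - ld 1).
Proof.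
rewrite class_block_cons /class_block cat0s; congr map; apply: eq_filter => i.
by case: (ld 1); rewrite ?addn1 ?addn0 ?subn1.
Qed.

Lemma group_prod_cons (w : nat -> nat) n :
  group_prod ld w n.+2 =
  let G := group_prod (shift_leaders ld) (fun i => w i.+1) n.+1 in
  if ld 1 then w 0 :: G else (w 0 * head 1 G) :: behead G.
Proof.
cbv zeta; rewrite /group_prod count_shift_leaders.
have := @count_leaders_gt0 (shift_leaders ld) n erefl.
case: (count _ _) => [//|C] _.
case: (ld 1) (class_block0 w n.+1) (class_blockS w n.+1) => B0 BS;
  rewrite ?addn1 ?addn0.
  rewrite [iota 0 C.+2]iota0S map_cons B0 -map_comp; congr (_ :: _).
    by rewrite /= muln1.
  by apply: eq_map => c; rewrite /= BS subn1.
rewrite [iota 0 C.+1]iota0S !map_cons B0 -!map_comp; congr (_ :: _).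
by apply: eq_map => c; rewrite /= BS subn0.
Qed.

Lemma leaders_map_cons (h : nat -> nat) n :
  [seq h i | i <- iota 0 n.+2 & ld i] =
  h 0 :: (if ld 1 then id else @behead nat)
           [seq h i.+1 | i <- iota 0 n.+1 & shift_leaders ld i].
Proof.
have E : [seq i <- iota 1 n | ld i.+1] = [seq i <- iota 1 n | shift_leaders ld i].
  by apply: eq_in_filter => -[|i]; rewrite mem_iota.
rewrite iota0S -cat1s filter_cat filter_map /= ld0 E.
by case: (ld 1); rewrite /= -map_comp.
Qed.
End LeaderClasses.

Lemma size_group_prod ld w m : size (group_prod ld w m) = count ld (iota 0 m).
Proof. by rewrite size_map size_iota. Qed.

Lemma eq_in_group_prod (ld : pred nat) (w w' : nat -> nat) m :
  {in gtn m, w =1 w'} -> group_prod ld w m = group_prod ld w' m.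
Proof.
move=> eq_w; apply: eq_map => c; congr foldr; apply/eq_in_map => i.
by rewrite mem_filter mem_iota => /andP[_ /andP[_ lt_i]]; apply: eq_w.
Qed.

Lemma class_idx_ltE (ld : pred nat) i j : ld 0 -> ld j ->
  (class_idx ld i < class_idx ld j) = (i < j).
Proof.
move=> ld0 ldj; rewrite /class_idx [count ld (iota 0 j.+1)]count_iotaS ldj addn1.
have := @count_leaders_gt0 ld i ld0.
case: (ltnP i j) => [lt_ij|le_ji]; first by have := count_iota_mono ld lt_ij; lia.
have := count_iota_mono ld (le_ji : j.+1 <= i.+1).
by rewrite [count ld (iota 0 j.+1)]count_iotaS ldj; lia.
Qed.

Lemma prod_class_blocks (ld : pred nat) (w : nat -> nat) n C :
  \prod_(c <- iota 0 C) \prod_(i <- iota 0 n | class_idx ld i == c) w i =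
  \prod_(i <- iota 0 n | class_idx ld i < C) w i.
Proof.
elim: C => [|C IH]; first by rewrite big_nil big_pred0.
rewrite (_ : iota 0 C.+1 = iota 0 C ++ [:: C]) ?big_cat ?big_seq1 ?IH; last by rewrite -addn1 iotaD.
rewrite [RHS](bigID (fun i => class_idx ld i < C)) /=.
congr (_ * _); apply: eq_bigl => i; rewrite ltnS; first by case: ltngtP.
by rewrite -leqNgt -eqn_leq.
Qed.

Lemma group_prod_prefix (ld : pred nat) (w : nat -> nat) j n :
  ld 0 -> ld j -> j < n ->
  prefix_prod (group_prod ld w n) (class_idx ld j) = \prod_(k <- iota 0 j) w k.
Proof.
move=> ld0 ldj lt_jn.
have le_cls : class_idx ld j <= count ld (iota 0 n).
  by have := count_iota_mono ld lt_jn; have := @count_leaders_gt0 ld j ld0; rewrite /class_idx; lia.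
rewrite /prefix_prod /group_prod -map_take take_iota (minn_idPl le_cls) foldrE big_map.
under eq_bigr => c _ do rewrite /class_block foldrE big_map big_filter.
rewrite prod_class_blocks (eq_bigl (fun i => i < j)) => [|i]; last exact: class_idx_ltE.
by rewrite -big_filter (filter_iota_ltn 0 (ltnW lt_jn)).
Qed.

Lemma coal_merge_cons x l : coal_merge (x :: l) =
  if coal_merge l is y :: r then
    if y.2 == x.1 * x.2 then (x.1 * y.1, x.2) :: r else x :: y :: r
  else [:: x].
Proof. by []. Qed.

Lemma coal_merge_group (l : seq (nat * nat)) (ld : pred nat) : ld 0 ->
  (forall k, 0 < k < size l ->
     ld k = ((nth (0, 0) l k).2 != (nth (0, 0) l k.-1).1 * (nth (0, 0) l k.-1).2)) ->
  coal_merge l = zip (group_prod ld (fun k => (nth (0, 0) l k).1) (size l))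
                     [seq (nth (0, 0) l i).2 | i <- iota 0 (size l) & ld i].
Proof.
elim: l ld => [|x l IH] ld ld0 ldE //.
case: l IH ldE => [|y l] IH ldE.
  by rewrite /group_prod /class_block /class_idx /= ld0 /= muln1 -surjective_pairing.
rewrite coal_merge_cons (IH (shift_leaders ld)) //; last by move=> [|k] //= lt_k; apply: ldE.
rewrite [size _]/= group_prod_cons // leaders_map_cons //.
set G := group_prod (shift_leaders ld) _ _.
have : 0 < size G by rewrite size_group_prod count_leaders_gt0.
case: G => [//|g r] _; rewrite [iota 0 _.+1]iota0S /= (ldE 1) //=.
by case: eqP => _ /=; rewrite ?muln1 -?surjective_pairing.
Qed.

Lemma renumC_take t k : k <= size t -> renumC t k = count (predC1 1) (take k t).
Proof. by move=> le_kt; rewrite -(map_nth_iota0 0 le_kt) count_map. Qed.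

Lemma renumCS t j : renumC t j.+1 = renumC t j + (nth 0 t j != 1).
Proof. exact: count_iotaS. Qed.

Lemma renumC_ltn t i j : i < j -> nth 0 t i != 1 -> renumC t i < renumC t j.
Proof.
move=> lt_ij ti; apply: leq_trans (count_iota_mono _ lt_ij).
by rewrite -/(renumC t i.+1) renumCS ti addn1.
Qed.

Lemma renumC_inj t i j : nth 0 t i != 1 -> nth 0 t j != 1 ->
  renumC t i = renumC t j -> i = j.
Proof.
move=> ti tj eq_ij; case: (ltngtP i j) => // [lt_ij|lt_ji].
  by have := renumC_ltn lt_ij ti; rewrite eq_ij ltnn.
by have := renumC_ltn lt_ji tj; rewrite eq_ij ltnn.
Qed.

Lemma nth_squeeze t j : j < size t -> nth 0 t j != 1 ->
  nth 0 [seq x <- t | x != 1] (renumC t j) = nth 0 t j.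
Proof.
move=> lt_jt tj; rewrite renumC_take ?(ltnW lt_jt) // -{1}(cat_take_drop j t) (drop_nth 0 lt_jt).
by rewrite filter_cat /= tj nth_cat size_filter ltnn subnn.
Qed.

Lemma renumC_lt_size t j : j < size t -> nth 0 t j != 1 ->
  renumC t j < size [seq x <- t | x != 1].
Proof.
move=> lt_jt tj; rewrite size_filter.
by have := renumC_ltn lt_jt tj; rewrite [renumC t (size t)]renumC_take // take_size.
Qed.

Lemma take_count_filter (T : Type) (p : pred T) s j :
  take (count p (take j s)) (filter p s) = filter p (take j s).
Proof. by elim: s j => [|x s IH] [|j] //=; [rewrite take0 | case: (p x); rewrite /= IH]. Qed.

Lemma prefix_prod_squeeze t j : j <= size t ->
  prefix_prod [seq x <- t | x != 1] (renumC t j) = prefix_prod t j.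
Proof.
move=> le_jt; rewrite renumC_take // /prefix_prod take_count_filter !foldrE big_filter.
by apply: big_rmcond => x /negPn/eqP.
Qed.

Lemma enc_stride_Some t j : enc_stride t (Some j) = prefix_prod t j.
Proof. by []. Qed.

Definition consecutive (o o' : option nat) : bool :=
  match o, o' with
  | None, None => true
  | Some j, Some j' => j' == j.+1
  | _, _ => false
  end.

Lemma enc_stride_consecutive t s o o' : all (leq 2) t ->
  (forall j, o = Some j -> j < size t /\ s = nth 0 t j) ->
  (forall j', o' = Some j' -> j' < size t) ->
  consecutive o o' = (enc_stride t o' == s * enc_stride t o).
Proof.
move=> t_gt1 ho ho'; have t_gt0 : all (leq 1) t.
  by apply: sub_all t_gt1 => x; apply: leq_trans.
case: o ho => [j|] ho; case: o' ho' => [j'|] ho'; rewrite [consecutive _ _]/= ?enc_stride_Some.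
- have [lt_jt ->] := ho j erefl.
  by rewrite -prefix_prodS // eq_prefix_prod // ltnW // ho'.
- have [lt_jt ->] := ho j erefl; rewrite eq_sym muln_eq0 !eqn0Ngt prefix_prod_gt0 //.
  by move/allP: t_gt0 => ->; rewrite ?mem_nth.
- by rewrite muln0 eqn0Ngt prefix_prod_gt0.
- by rewrite muln0.
Qed.

Section MorphismClasses.
Variable g : tmor.
Local Notation b := (tm_map g).

Lemma leaderC0 : leaderC g 0.
Proof. by []. Qed.

Lemma relD0_succ k : relD0 g k k.+1 = consecutive (nth None b k) (nth None b k.+1).
Proof.
rewrite /relD0 subSnn /= subnn.
case: (nth None b k) => [x|]; case: (nth None b k.+1) => [y|] //=; last by rewrite andbF.
by rewrite add0n subSnn add1n eqxx andbT; apply/eqP/eqP => [[]|->].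
Qed.

Lemma leaderD_succ k : leaderD g k.+1 = ~~ relD0 g k k.+1.
Proof.
apply/allP/idP => [/(_ k) |not_rel j]; first by rewrite mem_iota add0n ltnSn; apply.
rewrite mem_iota add0n ltnS => /andP[_ le_jk]; apply: contra not_rel => rel_j.
have [in_k in_k1] : k \in iota j (k.+1 - j).+1 /\ k.+1 \in iota j (k.+1 - j).+1.
  by rewrite !mem_iota; lia.
rewrite relD0_succ; case/orP: rel_j => [/allP none | /andP[bj /allP shift]].
  by rewrite (eqP (none _ in_k)) (eqP (none _ in_k1)).
move: (shift _ in_k) (shift _ in_k1); case: (nth None b j) bj => // x _ /eqP-> /eqP-> /=.
by apply/eqP; lia.
Qed.

Lemma leaderC_image i j : is_tmor g -> leaderD g i -> nth None b i = Some j -> leaderC g j.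
Proof.
case=> _ _ _ _ inj lead_i bi; apply/allP => k; rewrite mem_iota add0n => /andP[_ lt_kj].
apply/negP => /hasP[i' _ /allP shift].
have /eqP b_last : nth None b (i' + (j - k)) == Some (k + (j - k)).
  by apply: shift; rewrite mem_iota; lia.
have /eqP b_prev : nth None b (i' + (j - k).-1) == Some (k + (j - k).-1).
  by apply: shift; rewrite mem_iota; lia.
rewrite subnKC ?(ltnW lt_kj) // in b_last; have {}b_last := inj _ _ _ b_last bi.
have Ei : i = (i' + (j - k).-1).+1 by lia.
move: lead_i; rewrite Ei leaderD_succ relD0_succ b_prev -Ei bi /=.
by apply/negP; rewrite negbK; apply/eqP; lia.
Qed.
End MorphismClasses.

(* By conversion, [sbar g] is [group_prod (leaderD g) (nth 0 (tm_dom g)) _],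
   [tbar g] is [group_prod (leaderC g) (nth 0 (tm_cod g)) _] and [clsC g] is
   [class_idx (leaderC g)]. *)
Lemma coal_sq_stride_leader g i j : is_tmor g -> leaderD g i ->
  nth None (tm_map g) i = Some j ->
  enc_stride (tbar g) (Some (clsC g j)) = enc_stride (tm_cod g) (Some j).
Proof.
move=> g_tmor lead_i bi; have [_ _ _ /(_ _ _ bi) [lt_jt _] _] := g_tmor.
rewrite !enc_stride_Some (prefix_prod_nth (ltnW lt_jt)).
exact: (group_prod_prefix _ (leaderC0 g) (leaderC_image g_tmor lead_i bi) lt_jt).
Qed.

Definition enc_flat (f : tmor) : seq (nat * nat) :=
  zip (tm_dom f) (map (enc_stride (tm_cod f)) (tm_map f)).

Lemma size_enc_flat f : size (tm_map f) = size (tm_dom f) ->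
  size (enc_flat f) = size (tm_dom f).
Proof. by move=> sz_f; rewrite size_zip size_map sz_f minnn. Qed.

Lemma nth_enc_flat f k : size (tm_map f) = size (tm_dom f) -> k < size (tm_dom f) ->
  nth (0, 0) (enc_flat f) k =
  (nth 0 (tm_dom f) k, enc_stride (tm_cod f) (nth None (tm_map f) k)).
Proof. by move=> sz_f lt_k; rewrite nth_zip ?size_map // (nth_map None) // sz_f. Qed.

Lemma coal_merge_enc_flat g : is_tmor g -> all (leq 2) (tm_cod g) ->
  coal_merge (enc_flat g) = enc_flat (coal_sq g).
Proof.
move=> g_tmor t_gt1; have [_ _ sz_g mapsto _] := g_tmor.
rewrite (coal_merge_group (ld := leaderD g)) ?size_enc_flat //; last first.
  move=> [|k] // /andP[_ lt_k].
  rewrite leaderD_succ relD0_succ !nth_enc_flat // ?(ltnW lt_k) //=.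
  by rewrite (enc_stride_consecutive (s := nth 0 (tm_dom g) k) t_gt1) //
    => [j /mapsto | j /mapsto[]].
congr (zip _ _).
  by apply: eq_in_group_prod => k lt_k; rewrite nth_enc_flat.
rewrite /bbar -map_comp; apply/eq_in_map => i.
rewrite mem_filter mem_iota => /andP[lead_i /andP[_ lt_i]].
rewrite nth_enc_flat //=; case bi: (nth None _ i) => [j|] //=.
exact: esym (coal_sq_stride_leader g_tmor lead_i bi).
Qed.

Definition squeeze_idx (s : seq nat) : seq nat := [seq k <- iota 0 (size s) | nth 0 s k != 1].

Lemma mem_squeeze_idx s k : (k \in squeeze_idx s) = (k < size s) && (nth 0 s k != 1).
Proof. by rewrite mem_filter mem_iota andbC. Qed.

Lemma squeezeM_idx f : size (tm_map f) = size (tm_dom f) ->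
  squeezeM f = TMor [seq nth 0 (tm_dom f) k | k <- squeeze_idx (tm_dom f)]
                    [seq x <- tm_cod f | x != 1]
                    [seq omap (renumC (tm_cod f)) (nth None (tm_map f) k)
                       | k <- squeeze_idx (tm_dom f)].
Proof.
case: f => s t a /= sz; rewrite /squeezeM /=.
have s_eq : s = map (nth 0 s) (iota 0 (size s)) by rewrite map_nth_iota0 ?take_size.
have a_eq : a = map (nth None a) (iota 0 (size s)) by rewrite -sz map_nth_iota0 ?take_size.
by rewrite {1}s_eq {1}a_eq {3}s_eq zip_map !filter_map -map_comp.
Qed.

Lemma squeezeL_enc_flat f : is_tmor f -> squeezeL (enc_flat f) = enc_flat (squeezeM f).
Proof.
case: f => s t a [_ _ /= sz mapsto _]; rewrite squeezeM_idx // /enc_flat /= -map_comp zip_map.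
have s_eq : s = map (nth 0 s) (iota 0 (size s)) by rewrite map_nth_iota0 ?take_size.
have a_eq : a = map (nth None a) (iota 0 (size s)) by rewrite -sz map_nth_iota0 ?take_size.
rewrite /squeezeL {1}s_eq {1}a_eq -map_comp zip_map filter_map.
apply/eq_in_map => k _; congr pair => /=; case ak: (nth None a k) => [j|] //.
by rewrite !enc_stride_Some prefix_prod_squeeze // ltnW // (mapsto _ _ ak).1.
Qed.

Lemma squeezeM_tmor f : is_tmor f -> is_tmor (squeezeM f).
Proof.
case: f => s t a [s_gt0 t_gt0 /= sz mapsto inj]; rewrite squeezeM_idx //=.
set idx := squeeze_idx s; set b := map (fun k => omap _ _) idx.
have idx_spec i : i < size idx -> nth 0 idx i < size s /\ nth 0 s (nth 0 idx i) != 1.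
  by move/(mem_nth 0); rewrite mem_squeeze_idx => /andP[].
have b_spec i j : nth None b i = Some j ->
    i < size idx /\ exists2 j0, nth None a (nth 0 idx i) = Some j0 & j = renumC t j0.
  case: (ltnP i (size idx)) => [lt_i | le_i]; last by rewrite nth_default ?size_map.
  by rewrite (nth_map 0) //; case: (nth None a _) => //= j0 [<-]; split=> //; exists j0.
split.
- apply/allP => x /mapP[k]; rewrite mem_squeeze_idx => /andP[lt_k _] ->.
  exact: (allP s_gt0) (mem_nth 0 lt_k).
- by apply/allP => x; rewrite mem_filter => /andP[_]; apply: (allP t_gt0).
- by rewrite !size_map.
- move=> i _ /b_spec[lt_i [j aj ->]]; have [lt_jt sj] := mapsto _ _ aj.
  have [_] := idx_spec i lt_i; rewrite (nth_map 0) // sj => tj.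
  by rewrite nth_squeeze ?renumC_lt_size.
- move=> i1 i2 _ /b_spec[lt1 [j1 a1 ->]] /b_spec[lt2 [j2 a2 eq_r]].
  have [_ s1] := idx_spec _ lt1; have [_ s2] := idx_spec _ lt2.
  rewrite (mapsto _ _ a1).2 in s1; rewrite (mapsto _ _ a2).2 in s2.
  move: a2; rewrite -(renumC_inj s1 s2 eq_r) => a2.
  apply/eqP; rewrite -(nth_uniq 0 lt1 lt2) ?filter_uniq ?iota_uniq //.
  exact/eqP/(inj _ _ _ a1 a2).
Qed.

Definition layout_of_modes (c : seq (nat * nat)) : layout :=
  match c with
  | [::] => NLeaf (1, 0)
  | [:: p] => NLeaf p
  | _ => NNode (map NLeaf c)
  end.

Lemma coalLE L : coalL L = layout_of_modes (coal_flatL (flat L)).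
Proof. by rewrite /coalL; case: coal_flatL => [|? []]. Qed.

Lemma flat_Lf f : size (ntm_map f) = size (flat (ntm_dom f)) ->
  flat (Lf f) = enc_flat (flat_mor f).
Proof.
move=> sz_f; rewrite /Lf; set ds := map _ (ntm_map f).
by have [|-> _] := @flat_zipn _ _ 0 (ntm_dom f) ds; rewrite ?size_map ?sz_f.
Qed.

Lemma size_coal_flatM f : size (tm_map (coal_flatM f)) = size (tm_dom (coal_flatM f)).
Proof. by rewrite /= /bbar /sbar !size_map size_filter size_iota. Qed.

Lemma Lf_coalM f : Lf (coalM f) = layout_of_modes (enc_flat (coal_flatM (flat_mor f))).
Proof.
rewrite /coalM /enc_flat; have := size_coal_flatM (flat_mor f).
case: (coal_flatM _) => [s t b] /= sz_b.
case: s b sz_b => [|s1 [|s2 s]] [|b1 [|b2 b]] // /eqP // sz_b;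
  rewrite /Lf [ntm_cod _]/= [ntm_dom _]/= [ntm_map _]/= flat_leaves //.
by rewrite (@zipn_leaves _ _ 0 [:: s1, s2 & s]) // size_map (eqP sz_b).
Qed.

Theorem mainTheorem3 (f : ntmor) : is_ntmor f -> coalL (Lf f) = Lf (coalM f).
Proof.
move=> f_mor; have [_ t_gt0 sz_f _ _] := f_mor.
rewrite coalLE flat_Lf // /coal_flatL squeezeL_enc_flat // coal_merge_enc_flat.
- by rewrite Lf_coalM.
- exact: squeezeM_tmor.
- by rewrite all_filter; apply: sub_all t_gt0 => -[|[|x]].
Qed.
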